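(* Let $\phi$ be an entanglement-breaking channel acting on $d\times d$ complex matrices. Suppose there exists a positive semidefinite matrix $A\ge 0$ with $\operatorname{rk}A=r<d$ such that $s=\operatorname{rk}\phi(A)$ satisfies $r^2+s^2<2dr$. Then the kernel of $\phi$ (as a linear map on $\mathcal M(d;\mathbb C)$) satisfies $$\dim\ker\phi\ \ge\ 2dr-r^2-s^2\ >\ 0 .$$
   Context: A quantum channel is a completely positive, trace-preserving linear map on $\mathcal M(d;\mathbb C)$. It is entanglement-breaking (EB) if for every system $B$ and every state $\rho_{AB}$ the output $(\phi\otimes I)(\rho_{AB})$ is separable; equivalently, $\phi$ can be written as $\phi(X)=\sum_i\rho_i\operatorname{Tr}[E_iX]$ with density matrices $\rho_i$ and positive operators $E_i$ summing to $\mathbb 1$. *)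

(* Complex matrices over an arbitrary numeric closed field C
   (e.g. algC). *)
From HB Require Import structures.
From mathcomp Require Import all_boot all_order all_algebra.
Set Implicit Arguments. Unset Strict Implicit. Unset Printing Implicit Defensive.
Import Order.TTheory GRing.Theory Num.Theory.
Local Open Scope ring_scope.

Section QDefs.
Variable C : numClosedFieldType.

Definition psdmx n (A : 'M[C]_n) : Prop :=
  forall v : 'cV[C]_n, 0 <= ((map_mx Num.conj v)^T *m A *m v) 0 0.

Definition state n (A : 'M[C]_n) : Prop := psdmx A /\ \tr A = 1.

(* splitting an index of 'I_(m * n) into its pair (inverse of mxvec_index) *)
Definition unpair_idx m n (k : 'I_(m * n)) : 'I_m * 'I_n :=
  enum_val (cast_ord (esym (mxvec_cast m n)) k).

(* Kronecker (tensor) product A (x) B, indexed compatibly with mxvec_index *)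
Definition kronmx m1 n1 m2 n2 (A : 'M[C]_(m1, n1)) (B : 'M[C]_(m2, n2))
  : 'M[C]_(m1 * m2, n1 * n2) :=
  \matrix_(i, j) (A (unpair_idx i).1 (unpair_idx j).1 *
                  B (unpair_idx i).2 (unpair_idx j).2).

(* the (c,e) block of rho : 'M_(d*k), an operator on the first factor *)
Definition blockmx d k (rho : 'M[C]_(d * k)) (c e : 'I_k) : 'M[C]_d :=
  \matrix_(a, b) rho (mxvec_index a c) (mxvec_index b e).

(* (phi (x) id_k)(rho) *)
Definition ampl d k (phi : 'M[C]_d -> 'M[C]_d) (rho : 'M[C]_(d * k))
  : 'M[C]_(d * k) :=
  \sum_(c < k) \sum_(e < k) kronmx (phi (blockmx rho c e)) (delta_mx c e).

Definition separable d k (rho : 'M[C]_(d * k)) : Prop :=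
  exists (N : nat) (p : 'I_N -> C) (s : 'I_N -> 'M[C]_d) (t : 'I_N -> 'M[C]_k),
    [/\ forall i, 0 <= p i /\ state (s i) /\ state (t i),
        \sum_i p i = 1 &
        rho = \sum_i p i *: kronmx (s i) (t i)].

(* completely positive, trace preserving (linearity is carried by the type) *)
Definition completely_positive d (phi : 'M[C]_d -> 'M[C]_d) : Prop :=
  forall (k : nat) (rho : 'M[C]_(d * k)), psdmx rho -> psdmx (ampl phi rho).

Definition trace_preserving d (phi : 'M[C]_d -> 'M[C]_d) : Prop :=
  forall X, \tr (phi X) = \tr X.

Definition quantum_channel d (phi : {linear 'M[C]_d -> 'M[C]_d}) : Prop :=
  completely_positive phi /\ trace_preserving phi.

Definition entanglement_breaking d (phi : {linear 'M[C]_d -> 'M[C]_d}) : Prop :=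
  quantum_channel phi /\
  forall (k : nat) (rho : 'M[C]_(d * k)), state rho -> separable (ampl phi rho).

End QDefs.

(* Write A = L R with L = col_base A and R = row_base A.  The subspace
   V = L M(r,d) + M(d,r) R of M(d) has dimension at least 2dr - r^2, since its
   two summands intersect inside L M(r,r) R.  Entanglement breaking forces phi to
   map V into the support space of phi(A), the operators L' Y R' for a rank
   factorization L' R' of phi(A), which has dimension at most s^2.  For the
   generators A Z and Z^* A of V this is seen on the state Gamma^* A Gamma with
   Gamma = (1 | Z): in a separable decomposition sum_i p_i s_i (x) t_i of its
   image under phi (x) id, the s_i that contribute to the (0,0) block phi(A) lie
   in its support, and the t_i vanishing at (0,0) vanish on the off-diagonal
   blocks as well, being positive semidefinite.  Rank-nullity on V concludes. *)

From mathcomp Require Import all_boot all_order all_algebra.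
From mathcomp Require Import ring zify.
Import Order.TTheory GRing.Theory Num.Theory.
Set Implicit Arguments. Unset Strict Implicit. Unset Printing Implicit Defensive.
Local Open Scope ring_scope.

Section SandwichSpaces.
Variable F : fieldType.

Definition leftmul_space m n p (L : 'M[F]_(m, n)) : {vspace 'M[F]_(m, p)} :=
  limg (linfun (@mulmx F m n p L)).

Definition rightmul_space m n p (R : 'M[F]_(n, p)) : {vspace 'M[F]_(m, p)} :=
  limg (linfun (@mulmxr F m n p R)).

Definition sandwich_space m n p q (L : 'M[F]_(m, n)) (R : 'M[F]_(p, q))
  : {vspace 'M[F]_(m, q)} :=
  limg (linfun (mulmxr R \o @mulmx F m n p L)).

Lemma mem_sandwich_space m n p q (L : 'M[F]_(m, n)) (R : 'M[F]_(p, q)) Y :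
  L *m Y *m R \in sandwich_space L R.
Proof. by apply/memv_imgP; exists Y; rewrite ?memvf ?lfunE. Qed.

Lemma dim_sandwich_space m n p q (L : 'M[F]_(m, n)) (R : 'M[F]_(p, q)) :
  (\dim (sandwich_space L R) <= n * p)%N.
Proof.
have := limg_ker_dim (linfun (mulmxr R \o @mulmx F m n p L)) fullv.
rewrite dimvf dim_matrix => dimE.
by rewrite -[(n * p)%N]/(n * p)%R -dimE leq_addl.
Qed.

Lemma sandwich_space_cap m n p q (L : 'M[F]_(m, n)) (R : 'M[F]_(p, q)) M X Y :
  row_full L -> M = L *m X -> M = Y *m R -> M \in sandwich_space L R.
Proof.
case/row_fullP=> L' L'L MX MY.
have -> : M = L *m (L' *m Y) *m R.
  by rewrite -!mulmxA -MY MX [L' *m _]mulmxA L'L mul1mx.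
exact: mem_sandwich_space.
Qed.

Lemma dim_leftmul_space m n p (L : 'M[F]_(m, n)) :
  row_full L -> \dim (leftmul_space p L) = (n * p)%N.
Proof.
move=> fullL; rewrite limg_dim_eq ?dimvf ?dim_matrix // capfv.
by apply/eqP/lker0P => Y1 Y2; rewrite !lfunE; apply: row_full_inj.
Qed.

Lemma dim_rightmul_space m n p (R : 'M[F]_(n, p)) :
  row_free R -> \dim (rightmul_space m R) = (m * n)%N.
Proof.
move=> freeR; rewrite limg_dim_eq ?dimvf ?dim_matrix // capfv.
by apply/eqP/lker0P => Y1 Y2; rewrite !lfunE; apply: row_free_inj.
Qed.

Lemma dim_leftmul_rightmul_space m n p q (L : 'M[F]_(m, n)) (R : 'M[F]_(p, q)) :
  row_full L -> row_free R ->
  (n * q + m * p <= \dim (leftmul_space q L + rightmul_space m R) + n * p)%N.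
Proof.
move=> fullL freeR.
rewrite -(dim_leftmul_space q fullL) -(dim_rightmul_space m freeR).
rewrite -dimv_sum_cap leq_add2l.
apply: leq_trans (dim_sandwich_space L R); apply/dimvS/subvP => M.
rewrite memv_cap => /andP[/memv_imgP[X _ MX] /memv_imgP[Y _ MY]].
by rewrite lfunE in MX; rewrite lfunE in MY; apply: sandwich_space_cap MX MY.
Qed.

End SandwichSpaces.

Section PsdMatrices.
Variable C : numClosedFieldType.

Definition ctrmx m n (X : 'M[C]_(m, n)) : 'M[C]_(n, m) := (map_mx Num.conj X)^T.

Lemma ctrmx_mul m n p (X : 'M[C]_(m, n)) (Y : 'M[C]_(n, p)) :
  ctrmx (X *m Y) = ctrmx Y *m ctrmx X.
Proof. by rewrite /ctrmx map_mxM trmx_mul. Qed.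

Lemma ctrmxK m n (X : 'M[C]_(m, n)) : ctrmx (ctrmx X) = X.
Proof. by apply/matrixP => i j; rewrite !mxE conjCK. Qed.

Lemma ctrmx1 n : ctrmx (1%:M : 'M[C]_n) = 1%:M.
Proof. by rewrite /ctrmx map_mx1 trmx1. Qed.

Definition sesqform n (M : 'M[C]_n) (u v : 'cV[C]_n) : C := (ctrmx u *m M *m v) 0 0.

Lemma sesqformDl n (M : 'M[C]_n) u1 u2 v :
  sesqform M (u1 + u2) v = sesqform M u1 v + sesqform M u2 v.
Proof. by rewrite /sesqform /ctrmx map_mxD linearD /= !mulmxDl mxE. Qed.

Lemma sesqformDr n (M : 'M[C]_n) u v1 v2 :
  sesqform M u (v1 + v2) = sesqform M u v1 + sesqform M u v2.
Proof. by rewrite /sesqform mulmxDr mxE. Qed.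

Lemma sesqformZl n (M : 'M[C]_n) a u v : sesqform M (a *: u) v = a^* * sesqform M u v.
Proof. by rewrite /sesqform /ctrmx map_mxZ linearZ /= -!scalemxAl mxE. Qed.

Lemma sesqformZr n (M : 'M[C]_n) a u v : sesqform M u (a *: v) = a * sesqform M u v.
Proof. by rewrite /sesqform -!scalemxAr mxE. Qed.

Lemma sesqform_sum n I (r : seq I) (P : pred I) (M : I -> 'M[C]_n) u v :
  sesqform (\sum_(i <- r | P i) M i) u v = \sum_(i <- r | P i) sesqform (M i) u v.
Proof. by rewrite /sesqform mulmx_sumr mulmx_suml summxE. Qed.

Lemma sesqform_scale n (M : 'M[C]_n) a u v : sesqform (a *: M) u v = a * sesqform M u v.
Proof. by rewrite /sesqform -scalemxAr -scalemxAl mxE. Qed.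

Lemma sesqform_deltal n (M : 'M[C]_n) i v : sesqform M (delta_mx i 0) v = (M *m v) i 0.
Proof.
rewrite /sesqform /ctrmx map_delta_mx trmx_delta -mulmxA mxE (bigD1 i) //= big1 ?addr0.
  by rewrite mxE !eqxx mul1r.
by move=> j /negbTE nji; rewrite mxE nji mul0r.
Qed.

Lemma sesqform_delta n (M : 'M[C]_n) i j :
  sesqform M (delta_mx i 0) (delta_mx j 0) = M i j.
Proof. by rewrite sesqform_deltal -colE mxE. Qed.

Lemma sesqform_congr m n (M : 'M[C]_n) (X : 'M[C]_(n, m)) u v :
  sesqform (ctrmx X *m M *m X) u v = sesqform M (X *m u) (X *m v).
Proof. by rewrite /sesqform ctrmx_mul !mulmxA. Qed.

Lemma psdmx_herm n (M : 'M[C]_n) : psdmx M ->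
  forall u v, sesqform M u v = (sesqform M v u)^*.
Proof.
move=> psdM u v; have real w : (sesqform M w w)^* = sesqform M w w.
  exact/conj_Creal/ger0_real/psdM.
have := real (u + v); have := real (u + 'i *: v).
rewrite !(sesqformDl, sesqformDr, sesqformZl, sesqformZr).
rewrite !(rmorphD, rmorphM) /= !real !conjCK conjCi.
set a := sesqform M u v; set b := sesqform M v u.
move=> /eqP + /eqP; rewrite -subr_eq0 => /eqP h1; rewrite -subr_eq0 => /eqP h2.
have e1 : (a^* + b^*) - (a + b) = 0 by rewrite -[RHS]h2; ring.
have /eqP : 'i * ((b^* - a^*) - (a - b)) = 0 by rewrite -[RHS]h1; ring.
rewrite mulf_eq0 (negbTE (neq0Ci _)) /= => /eqP e2.
have : (a - b^*) *+ 2 = - ((a^* + b^*) - (a + b) + ((b^* - a^*) - (a - b))) by ring.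
by rewrite e1 e2 addr0 oppr0 => /eqP; rewrite mulrn_eq0 /= subr_eq0 => /eqP.
Qed.

Lemma psdmx_null n (M : 'M[C]_n) v : psdmx M ->
  sesqform M v v = 0 -> forall u, sesqform M u v = 0.
Proof.
move=> psdM vMv0 u.
set a := sesqform M u v; set g := sesqform M u u.
have g_ge0 : 0 <= g := psdM u.
(* The form at (g + 1) v - a u equals - |a|^2 (g + 2). *)
pose w := (g + 1) *: v + (- a) *: u.
have : 0 <= sesqform M w w := psdM w.
rewrite /w !(sesqformDl, sesqformDr, sesqformZl, sesqformZr) vMv0 -/a -/g.
rewrite [sesqform M v u]psdmx_herm // -/a rmorphN /=.
have g1_real : (g + 1)^* = g + 1 by apply/conj_Creal/ger0_real/addr_ge0.
rewrite g1_real; set form_w := (X in 0 <= X -> _).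
have -> : form_w = - ((a * a^*) * (g + 2)) by rewrite /form_w; ring.
rewrite oppr_ge0 pmulr_lle0 ?ltr_wpDl // => aa_le0.
have : a * a^* == 0 by rewrite eq_le aa_le0 mul_conjC_ge0.
by rewrite mul_conjC_eq0 => /eqP.
Qed.

Lemma psdmx_mul_eq0 n (M : 'M[C]_n) v : psdmx M -> sesqform M v v = 0 -> M *m v = 0.
Proof.
move=> psdM vMv0; apply/matrixP => i j; rewrite (ord1 j) -sesqform_deltal mxE.
exact: psdmx_null.
Qed.

Lemma psdmx_ctrmx n (M : 'M[C]_n) : psdmx M -> ctrmx M = M.
Proof.
move=> psdM; apply/matrixP => i j.
by rewrite !mxE -sesqform_delta (psdmx_herm psdM) sesqform_delta conjCK.
Qed.

Lemma psdmx_diag_ge0 n (M : 'M[C]_n) i : psdmx M -> 0 <= M i i.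
Proof. by move=> psdM; rewrite -sesqform_delta; apply: psdM. Qed.

Lemma psdmx_diag_eq0 n (M : 'M[C]_n) i j :
  psdmx M -> M i i = 0 -> M j i = 0 /\ M i j = 0.
Proof.
move=> psdM Mii0; have Mji0 : M j i = 0.
  by rewrite -sesqform_delta; apply: psdmx_null; rewrite ?sesqform_delta.
split=> //.
by rewrite -sesqform_delta (psdmx_herm psdM) sesqform_delta Mji0 rmorph0.
Qed.

Lemma psdmx_congr m n (M : 'M[C]_n) (X : 'M[C]_(n, m)) :
  psdmx M -> psdmx (ctrmx X *m M *m X).
Proof. by move=> psdM v; rewrite -[_ 0 0]/(sesqform _ v v) sesqform_congr; apply: psdM. Qed.

Lemma psdmx_scale n (M : 'M[C]_n) a : 0 <= a -> psdmx M -> psdmx (a *: M).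
Proof.
move=> a_ge0 psdM v; rewrite -[_ 0 0]/(sesqform _ v v) sesqform_scale.
exact: mulr_ge0 (psdM v).
Qed.

End PsdMatrices.

Section EntanglementBreaking.
Variable C : numClosedFieldType.

Definition support_space n (B : 'M[C]_n) : {vspace 'M[C]_n} :=
  sandwich_space (col_base B) (row_base B).

Lemma psdmx_in_support_space n (S B : 'M[C]_n) :
  psdmx S -> psdmx B -> (forall v : 'cV_n, B *m v = 0 -> S *m v = 0) ->
  S \in support_space B.
Proof.
move=> psdS psdB kerBS.
have /submxP[D SDB] : (S <= B)%MS.
  rewrite submxE; apply/eqP/matrixP => x y.
  have -> : (S *m cokermx B) x y = (S *m (cokermx B *m (delta_mx y 0 : 'cV_n))) x 0.
    by rewrite [in RHS]mulmxA -colE [in RHS]mxE.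
  by rewrite kerBS ?mxE // mulmxA mulmx_coker mul0mx.
apply: (sandwich_space_cap (X := row_base B *m ctrmx D) (Y := D *m col_base B)
  (col_base_full B)).
  by rewrite mulmxA mulmx_base -{1}(psdmx_ctrmx psdS) SDB ctrmx_mul psdmx_ctrmx.
by rewrite -mulmxA mulmx_base.
Qed.

Lemma psdmx_summand_ker n N (a : 'I_N -> C) (S : 'I_N -> 'M[C]_n) j (v : 'cV[C]_n) :
  (forall i, 0 <= a i) -> (forall i, psdmx (S i)) -> a j != 0 ->
  (\sum_i a i *: S i) *m v = 0 -> S j *m v = 0.
Proof.
move=> a_ge0 psdS aj0 Bv0; apply: (psdmx_mul_eq0 (psdS j)).
have sum0 : \sum_i a i * sesqform (S i) v v = 0.
  under eq_bigr do rewrite -sesqform_scale.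
  by rewrite -sesqform_sum /sesqform -mulmxA Bv0 mulmx0 mxE.
have := psumr_eq0P (fun i _ => mulr_ge0 (a_ge0 i) (psdS i v)) sum0 (i := j) isT.
by move/eqP; rewrite mulf_eq0 (negbTE aj0) => /eqP.
Qed.

Lemma psdmx_summand_in_support_space n N (a : 'I_N -> C) (S : 'I_N -> 'M[C]_n) j :
  (forall i, 0 <= a i) -> (forall i, psdmx (S i)) -> a j != 0 ->
  S j \in support_space (\sum_i a i *: S i).
Proof.
move=> a_ge0 psdS aj0; apply: psdmx_in_support_space => // [v|v].
  rewrite -[_ 0 0]/(sesqform _ v v) sesqform_sum sumr_ge0 // => i _.
  by rewrite sesqform_scale mulr_ge0 //; apply: psdS.
exact: psdmx_summand_ker.
Qed.

Lemma sum_psd_block_in_support_space d k N (w : 'I_N -> C)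
    (s : 'I_N -> 'M[C]_d) (t : 'I_N -> 'M[C]_k) c0 c e :
  (forall i, [/\ 0 <= w i, psdmx (s i) & psdmx (t i)]) -> (c == c0) || (e == c0) ->
  \sum_i (w i * t i c e) *: s i \in support_space (\sum_i (w i * t i c0 c0) *: s i).
Proof.
move=> wst c0_ce; apply: memv_suml => i _; have [w_ge0 psd_s psd_t] := wst i.
have [/eqP|nz] := eqVneq (w i * t i c0 c0) 0.
  rewrite mulf_eq0 => /orP[/eqP -> | /eqP tc0].
    by rewrite mul0r scale0r mem0v.
  have [tec0 tc0e] := psdmx_diag_eq0 e psd_t tc0.
  have [tcc0 tc0c] := psdmx_diag_eq0 c psd_t tc0.
  by case/orP: c0_ce => /eqP ->; rewrite ?tc0e ?tcc0 mulr0 scale0r mem0v.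
apply/memvZ/psdmx_summand_in_support_space => // j.
  have [? _ psd_tj] := wst j; exact/mulr_ge0/psdmx_diag_ge0.
by have [] := wst j.
Qed.

Lemma unpair_idxK m n (a : 'I_m) (c : 'I_n) : unpair_idx (mxvec_index a c) = (a, c).
Proof. by rewrite /unpair_idx /mxvec_index cast_ordK enum_rankK. Qed.

Lemma kronmxE m1 n1 m2 n2 (X : 'M[C]_(m1, n1)) (Y : 'M[C]_(m2, n2)) a c b e :
  kronmx X Y (mxvec_index a c) (mxvec_index b e) = X a b * Y c e.
Proof. by rewrite mxE !unpair_idxK. Qed.

Lemma blockmxZ d k a (rho : 'M[C]_(d * k)) c e :
  blockmx (a *: rho) c e = a *: blockmx rho c e.
Proof. by apply/matrixP => x y; rewrite !mxE. Qed.

Lemma ampl_mxvec_index d k (phi : 'M[C]_d -> 'M[C]_d) (rho : 'M[C]_(d * k)) a b c e :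
  ampl phi rho (mxvec_index a c) (mxvec_index b e) = phi (blockmx rho c e) a b.
Proof.
rewrite summxE (bigD1 c) //= [X in _ + X]big1 ?addr0 => [|c' /negbTE c'c]; last first.
  by rewrite summxE big1 // => e' _; rewrite kronmxE mxE eq_sym c'c mulr0.
rewrite summxE (bigD1 e) //= [X in _ + X]big1 ?addr0 => [|e' /negbTE e'e].
  by rewrite kronmxE mxE !eqxx mulr1.
by rewrite kronmxE mxE [e == _]eq_sym e'e andbF mulr0.
Qed.

Lemma separable_ampl_blocks d k (phi : 'M[C]_d -> 'M[C]_d) (rho : 'M[C]_(d * k)) :
  separable (ampl phi rho) ->
  exists N (p : 'I_N -> C) (s : 'I_N -> 'M[C]_d) (t : 'I_N -> 'M[C]_k),
    (forall i, [/\ 0 <= p i, psdmx (s i) & psdmx (t i)]) /\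
    forall c e, phi (blockmx rho c e) = \sum_i (p i * t i c e) *: s i.
Proof.
case=> N [p [s [t [pst _ rhoE]]]]; exists N, p, s, t; split.
  by move=> i; have [? [[? _] [? _]]] := pst i.
move=> c e; apply/matrixP => a b; rewrite -ampl_mxvec_index rhoE !summxE.
by apply: eq_bigr => i _; rewrite !mxE !unpair_idxK /=; ring.
Qed.

(* The block row (G 0 | ... | G (k-1)), with its columns ordered as the indices
   of kronmx, so that the (c, e) block of stackmx^* A stackmx is G c^* A G e. *)
Definition stackmx d k (G : 'I_k -> 'M[C]_d) : 'M[C]_(d, d * k) :=
  \matrix_(x, j) G (unpair_idx j).2 x (unpair_idx j).1.

Lemma mulmx_stackmxE d k (G : 'I_k -> 'M[C]_d) (A : 'M[C]_d) x a c :
  (A *m stackmx G) x (mxvec_index a c) = (A *m G c) x a.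
Proof. by rewrite !mxE; apply: eq_bigr => y _; rewrite !mxE !unpair_idxK. Qed.

Lemma blockmx_stackmx d k (G : 'I_k -> 'M[C]_d) (A : 'M[C]_d) c e :
  blockmx (ctrmx (stackmx G) *m A *m stackmx G) c e = ctrmx (G c) *m A *m G e.
Proof.
apply/matrixP => a b; rewrite !mxE; apply: eq_bigr => y _; rewrite !mxE !unpair_idxK.
by congr (_ * _); apply: eq_bigr => z _; rewrite !mxE !unpair_idxK.
Qed.

Lemma mxtrace_stackmx_gt0 d k (G : 'I_k -> 'M[C]_d) (A : 'M[C]_d) c0 :
  psdmx A -> A != 0 -> G c0 = 1%:M ->
  0 < \tr (ctrmx (stackmx G) *m A *m stackmx G).
Proof.
move=> psdA nzA Gc0; set rho := ctrmx _ *m _ *m _.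
have diag_ge0 j : 0 <= rho j j by apply/psdmx_diag_ge0/psdmx_congr.
rewrite lt_def sumr_ge0 // andbT; apply: contraNneq nzA => tr0.
apply/eqP/matrixP => x a.
have := psumr_eq0P (fun j _ => diag_ge0 j) tr0 (i := mxvec_index a c0) isT.
rewrite -sesqform_delta sesqform_congr => /(psdmx_mul_eq0 psdA) /matrixP /(_ x 0).
by rewrite mulmxA -colE [in LHS]mxE mulmx_stackmxE Gc0 mulmx1 !mxE.
Qed.

Lemma eb_mul_in_support_space d (phi : {linear 'M[C]_d -> 'M[C]_d}) (A Z : 'M[C]_d) :
  entanglement_breaking phi -> psdmx A -> A != 0 ->
  phi (A *m Z) \in support_space (phi A) /\
  phi (ctrmx Z *m A) \in support_space (phi A).
Proof.
move=> [_ ebphi] psdA nzA.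
pose G (c : 'I_2) := if c == 0 then 1%:M else Z.
have G0 : G 0 = 1%:M by [].
have G1 : G 1 = Z by [].
set rho := ctrmx (stackmx G) *m A *m stackmx G.
have tau_gt0 : 0 < \tr rho := mxtrace_stackmx_gt0 psdA nzA G0.
have rho_state : state ((\tr rho)^-1 *: rho).
  split; last by rewrite mxtraceZ mulVf ?gt_eqF.
  by apply: psdmx_scale; [rewrite invr_ge0 ltW | apply: psdmx_congr].
have [N [p [s [t [pst blocks]]]]] := separable_ampl_blocks (ebphi 2 _ rho_state).
have phi_blocks c e :
    phi (ctrmx (G c) *m A *m G e) = \sum_i ((\tr rho * p i) * t i c e) *: s i.
  have := blocks c e; rewrite blockmxZ linearZ blockmx_stackmx /=.
  move/(congr1 ( *:%R (\tr rho))); rewrite scalerA mulfV ?gt_eqF // scale1r => ->.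
  by rewrite scaler_sumr; apply: eq_bigr => i _; rewrite scalerA mulrA.
have wst i : [/\ 0 <= \tr rho * p i, psdmx (s i) & psdmx (t i)].
  have [p_ge0 psd_s psd_t] := pst i; split=> //; exact: mulr_ge0 (ltW tau_gt0) p_ge0.
have phiA : phi A = \sum_i ((\tr rho * p i) * t i 0 0) *: s i.
  by rewrite -phi_blocks G0 ctrmx1 mul1mx mulmx1.
split.
  have := sum_psd_block_in_support_space (c0 := 0) (c := 0) (e := 1) wst isT.
  by rewrite -phiA -phi_blocks G0 G1 ctrmx1 mul1mx.
have := sum_psd_block_in_support_space (c0 := 0) (c := 1) (e := 0) wst isT.
by rewrite -phiA -phi_blocks G0 G1 mulmx1.
Qed.

Lemma eb_limg_in_support_space d (phi : {linear 'M[C]_d -> 'M[C]_d}) (A : 'M[C]_d) :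
  entanglement_breaking phi -> psdmx A -> A != 0 ->
  (linfun phi @: (leftmul_space d (col_base A) + rightmul_space d (row_base A))
    <= support_space (phi A))%VS.
Proof.
move=> ebphi psdA nzA.
have [R' RR'] := row_freeP (row_base_free A).
have [L' L'L] := row_fullP (col_base_full A).
have AR' : A *m R' = col_base A.
  by have := congr1 (mulmx^~ R') (mulmx_base A); rewrite /= -mulmxA RR' mulmx1.
have L'A : L' *m A = row_base A.
  by have := congr1 (mulmx L') (mulmx_base A); rewrite mulmxA L'L mul1mx.
rewrite limgD subv_add; apply/andP; split; apply/subvP.
  move=> _ /memv_imgP[_ /memv_imgP[Y _ ->] ->]; rewrite !lfunE /=.
  have -> : col_base A *m Y = A *m (R' *m Y) by rewrite mulmxA AR'.
  exact: (eb_mul_in_support_space _ ebphi psdA nzA).1.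
move=> _ /memv_imgP[_ /memv_imgP[Y _ ->] ->]; rewrite !lfunE /=.
have -> : Y *m row_base A = ctrmx (ctrmx (Y *m L')) *m A.
  by rewrite ctrmxK -mulmxA L'A.
exact: (eb_mul_in_support_space _ ebphi psdA nzA).2.
Qed.

End EntanglementBreaking.

Theorem mainTheorem4 (C : numClosedFieldType) (d : nat)
    (phi : {linear 'M[C]_d -> 'M[C]_d}) (A : 'M[C]_d) (r s : nat) :
  entanglement_breaking phi ->
  psdmx A -> \rank A = r -> (r < d)%N ->
  \rank (phi A) = s ->
  (r ^ 2 + s ^ 2 < 2 * d * r)%N ->
  (2 * d * r - (r ^ 2 + s ^ 2) <= \dim (lker (linfun phi)))%N /\
  (0 < 2 * d * r - (r ^ 2 + s ^ 2))%N.
Proof.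
move=> ebphi psdA rankA _ rank_phiA ineq; split; last by rewrite subn_gt0.
have nzA : A != 0.
  by apply: contraTneq ineq => A0; move: rankA; rewrite A0 mxrank0 => <-; lia.
set V := (leftmul_space d (col_base A) + rightmul_space d (row_base A))%VS.
have dimV : (2 * d * r <= \dim V + r ^ 2)%N.
  have := dim_leftmul_rightmul_space (m := d) (q := d) (col_base_full A) (row_base_free A).
  by rewrite -/V rankA; nia.
have dim_phiV : (\dim (linfun phi @: V) <= s ^ 2)%N.
  rewrite -rank_phiA -mulnn; apply: leq_trans (dim_sandwich_space _ _).
  exact/dimvS/eb_limg_in_support_space.
have rank_nullity :
    (\dim (V :&: lker (linfun phi)) + \dim (linfun phi @: V) = \dim V)%N.
  exact: limg_ker_dim.
apply: leq_trans (dimvS (capvSr V _)); lia.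
Qed.
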